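(* Let $L$ be a PG-lattice and $M$ a faithful multiplication PG-lattice $L$-module with $I_M$ compact, and let $\delta_1(A)=(\sqrt{(A:I_M)})I_M$. If $N\in M$ is proper, then $\sqrt{(N:K)}\,K\leqslant\delta_1(N)$ for every proper element $K\in M$ with $K\not\leqslant N$.
   Context: $L$ is a multiplicative lattice (complete lattice with commutative, associative multiplication distributing over arbitrary joins, identity $1$, least $0$), compactly generated, $1$ compact, finite products of compact elements compact; $L_\ast$ = compact elements. An $L$-module is a complete lattice $M$ (least $O_M$, greatest $I_M$) with product $aB\in M$ satisfying $(\bigvee a_\alpha)A=\bigvee(a_\alpha A)$, $a(\bigvee A_\alpha)=\bigvee(aA_\alpha)$, $(ab)A=a(bA)$, $1A=A$, $0A=O_M$. $(A:B)=\bigvee\{x\in L:xB\leqslant A\}$ for $A,B\in M$; $\sqrt a=\bigvee\{x\in L_\ast:x^n\leqslant a\text{ for some }n\in\mathbb Z_+\}$. $e\in L$ is principal if $a\wedge be=((a:e)\wedge b)e$ and $(ae\vee b):e=(b:e)\vee a$ for all $a,b$; $L$ is a PG-lattice if every element is a join of principal elements. $N\in M$ is principal if $(b\wedge(B:N))N=bN\wedge B$ and $b\vee(B:N)=((bN\vee B):N)$ for all $b\in L,B\in M$; $M$ is a PG-lattice module if every element is a join of principal elements. $M$ is faithful if $(O_M:I_M)=0$; a multiplication module if every element of $M$ is $aI_M$ for some $a\in L$. Proper means $<I_M$. *)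

From Stdlib Require Import List.
Set Implicit Arguments.

Record MultLattice := {
  L_car :> Type;
  L_le : L_car -> L_car -> Prop;
  L_sup : (L_car -> Prop) -> L_car;
  L_mul : L_car -> L_car -> L_car;
  L_one : L_car;
  L_le_refl : forall a, L_le a a;
  L_le_trans : forall a b c, L_le a b -> L_le b c -> L_le a c;
  L_le_antisym : forall a b, L_le a b -> L_le b a -> a = b;
  L_sup_ub : forall (S : L_car -> Prop) x, S x -> L_le x (L_sup S);
  L_sup_least : forall (S : L_car -> Prop) y,
      (forall x, S x -> L_le x y) -> L_le (L_sup S) y;
  L_mul_comm : forall a b, L_mul a b = L_mul b a;
  L_mul_assoc : forall a b c, L_mul a (L_mul b c) = L_mul (L_mul a b) c;
  L_mul_one : forall a, L_mul L_one a = a;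
  L_mul_sup : forall a (S : L_car -> Prop),
      L_mul a (L_sup S) = L_sup (fun y => exists x, S x /\ y = L_mul a x)
}.

Arguments L_le {_} _ _.
Arguments L_sup {_} _.
Arguments L_mul {_} _ _.

Section LatticeDefs.
Variable L : MultLattice.

Definition lzero : L := L_sup (fun _ => False).
Definition ltop : L := L_sup (fun _ => True).
Definition ljoin (a b : L) : L := L_sup (fun x => x = a \/ x = b).
Definition lmeet (a b : L) : L := L_sup (fun x => L_le x a /\ L_le x b).

Fixpoint lpow (x : L) (n : nat) : L :=
  match n with 0 => L_one L | S k => L_mul x (lpow x k) end.

Definition L_compact (c : L) : Prop :=
  forall S : L -> Prop, L_le c (L_sup S) ->
    exists l : list L, (forall x, In x l -> S x) /\ L_le c (L_sup (fun x => In x l)).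

Definition lcolon (a b : L) : L := L_sup (fun x => L_le (L_mul x b) a).

Definition lsqrt (a : L) : L :=
  L_sup (fun x => L_compact x /\ exists n : nat, (1 <= n)%nat /\ L_le (lpow x n) a).

Definition L_standard : Prop :=
  (forall a, a = L_sup (fun c => L_compact c /\ L_le c a)) /\
  L_compact (L_one L) /\
  (forall a b, L_compact a -> L_compact b -> L_compact (L_mul a b)).

Definition L_principal (e : L) : Prop :=
  (forall a b, lmeet a (L_mul b e) = L_mul (lmeet (lcolon a e) b) e) /\
  (forall a b, lcolon (ljoin (L_mul a e) b) e = ljoin (lcolon b e) a).

Definition PG_lattice : Prop :=
  forall a : L, exists S : L -> Prop, (forall e, S e -> L_principal e) /\ a = L_sup S.

End LatticeDefs.
Arguments lzero L : clear implicits.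
Arguments ljoin {L} _ _.
Arguments lmeet {L} _ _.
Arguments lpow {L} _ _.
Arguments L_compact {L} _.
Arguments lcolon {L} _ _.
Arguments lsqrt {L} _.
Arguments L_principal {L} _.

Record LModule (L : MultLattice) := {
  M_car :> Type;
  M_le : M_car -> M_car -> Prop;
  M_sup : (M_car -> Prop) -> M_car;
  M_act : L -> M_car -> M_car;
  M_le_refl : forall A, M_le A A;
  M_le_trans : forall A B C, M_le A B -> M_le B C -> M_le A C;
  M_le_antisym : forall A B, M_le A B -> M_le B A -> A = B;
  M_sup_ub : forall (S : M_car -> Prop) X, S X -> M_le X (M_sup S);
  M_sup_least : forall (S : M_car -> Prop) Y,
      (forall X, S X -> M_le X Y) -> M_le (M_sup S) Y;
  M_act_supl : forall (S : L -> Prop) A,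
      M_act (L_sup S) A = M_sup (fun B => exists a, S a /\ B = M_act a A);
  M_act_supr : forall a (T : M_car -> Prop),
      M_act a (M_sup T) = M_sup (fun B => exists A, T A /\ B = M_act a A);
  M_act_mul : forall a b A, M_act (L_mul a b) A = M_act a (M_act b A);
  M_act_one : forall A, M_act (L_one L) A = A;
  M_act_zero : forall A, M_act (lzero L) A = M_sup (fun _ => False)
}.

Arguments M_le {_ _} _ _.
Arguments M_sup {_ _} _.
Arguments M_act {_ _} _ _.

Section ModuleDefs.
Variable L : MultLattice.
Variable M : LModule L.

Definition mzero : M := M_sup (fun _ => False).
Definition mtop : M := M_sup (fun _ => True).
Definition mjoin (A B : M) : M := M_sup (fun X => X = A \/ X = B).
Definition mmeet (A B : M) : M := M_sup (fun X => M_le X A /\ M_le X B).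

Definition mcolon (A B : M) : L := L_sup (fun x => M_le (M_act x B) A).

Definition M_compact (C : M) : Prop :=
  forall S : M -> Prop, M_le C (M_sup S) ->
    exists l : list M, (forall X, In X l -> S X) /\ M_le C (M_sup (fun X => In X l)).

Definition M_proper (N : M) : Prop := M_le N mtop /\ N <> mtop.

Definition M_faithful : Prop := mcolon mzero mtop = lzero L.

Definition M_multiplication : Prop := forall A : M, exists a : L, A = M_act a mtop.

Definition M_principal (N : M) : Prop :=
  (forall (b : L) (B : M), M_act (lmeet b (mcolon B N)) N = mmeet (M_act b N) B) /\
  (forall (b : L) (B : M), ljoin b (mcolon B N) = mcolon (mjoin (M_act b N) B) N).

Definition PG_module : Prop :=
  forall A : M, exists S : M -> Prop, (forall N, S N -> M_principal N) /\ A = M_sup S.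

Definition delta1 (A : M) : M := M_act (lsqrt (mcolon A mtop)) mtop.

End ModuleDefs.
Arguments mzero {L} M.
Arguments mtop {L} M.
Arguments mjoin {L M} _ _.
Arguments mmeet {L M} _ _.
Arguments mcolon {L M} _ _.
Arguments M_compact {L M} _.
Arguments M_proper {L M} _.
Arguments M_faithful {L} M.
Arguments M_multiplication {L} M.
Arguments M_principal {L M} _.
Arguments PG_module {L} M.
Arguments delta1 {L M} _.

(* Since M is a multiplication module, K = k I_M with
   k = (K : I_M), and k is the join of the compact elements d <= k.  Hence
   sqrt(N : K) K is the join of the elements (c d) I_M where c is compact with
   c^n <= (N : K) for some n >= 1 and d is compact with d I_M <= K.  Each such
   c d is compact, and
       (c d)^n I_M = c^n d^n I_M <= c^n d I_M <= c^n K <= N,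
   so c d <= sqrt(N : I_M), whence (c d) I_M <= delta_1(N). *)
From Stdlib Require Import List.

Section LatticeFacts.
Variable L : MultLattice.

Lemma sup_pair_le (a b : L) : L_le a b -> L_sup (fun x => x = a \/ x = b) = b.
Proof.
  intro hab. apply L_le_antisym.
  - apply L_sup_least. intros x [-> | ->]; [exact hab | apply L_le_refl].
  - apply L_sup_ub. now right.
Qed.

Lemma lpow_mul (c d : L) (n : nat) :
  lpow (L_mul c d) n = L_mul (lpow c n) (lpow d n).
Proof.
  induction n as [| n IH]; simpl.
  - now rewrite L_mul_one.
  - rewrite IH, !L_mul_assoc. f_equal.
    rewrite <- !L_mul_assoc. f_equal. apply L_mul_comm.
Qed.

End LatticeFacts.
Arguments sup_pair_le {L a b} _.

Section ModuleFacts.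
Variable L : MultLattice.
Variable M : LModule L.

Lemma msup_pair_le {A B : M} : M_le A B -> M_sup (fun X => X = A \/ X = B) = B.
Proof.
  intro hAB. apply M_le_antisym.
  - apply M_sup_least. intros X [-> | ->]; [exact hAB | apply M_le_refl].
  - apply M_sup_ub. now right.
Qed.

Lemma act_mono_l (a b : L) (X : M) : L_le a b -> M_le (M_act a X) (M_act b X).
Proof.
  intro hab. rewrite <- (sup_pair_le hab), M_act_supl.
  apply M_sup_ub. exists a. split; auto.
Qed.

Lemma act_mono_r (a : L) (A B : M) : M_le A B -> M_le (M_act a A) (M_act a B).
Proof.
  intro hAB. rewrite <- (msup_pair_le hAB), M_act_supr.
  apply M_sup_ub. exists A. split; auto.
Qed.

Lemma le_mtop (X : M) : M_le X (mtop M).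
Proof. apply M_sup_ub. exact I. Qed.

Lemma act_sup_le (S : L -> Prop) (X Y : M) :
  (forall s, S s -> M_le (M_act s X) Y) -> M_le (M_act (L_sup S) X) Y.
Proof.
  intro hS. rewrite M_act_supl. apply M_sup_least.
  intros Z [s [Hs ->]]. exact (hS s Hs).
Qed.

Lemma mcolon_act_le (A B : M) : M_le (M_act (mcolon A B) B) A.
Proof. apply act_sup_le. now intros s Hs. Qed.

Lemma le_mcolon (a : L) (A B : M) : M_le (M_act a B) A -> L_le a (mcolon A B).
Proof. intro Ha. unfold mcolon. now apply L_sup_ub. Qed.

Lemma multiplication_colon_eq :
  M_multiplication M -> forall A : M, A = M_act (mcolon A (mtop M)) (mtop M).
Proof.
  intros Hmult A. apply M_le_antisym; [| apply mcolon_act_le].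
  destruct (Hmult A) as [a Ha].
  rewrite Ha at 1. apply act_mono_l, le_mcolon. rewrite <- Ha. apply M_le_refl.
Qed.

Lemma lpow_act_top_le (d : L) {n : nat} :
  (1 <= n)%nat -> M_le (M_act (lpow d n) (mtop M)) (M_act d (mtop M)).
Proof.
  intro hn. destruct n as [| n]; [inversion hn |]. simpl.
  rewrite M_act_mul. apply act_mono_r, le_mtop.
Qed.

Lemma compact_product_in_radical (N K : M) (c d : L) (n : nat) :
  (forall a b : L, L_compact a -> L_compact b -> L_compact (L_mul a b)) ->
  L_compact c -> L_compact d -> (1 <= n)%nat ->
  L_le (lpow c n) (mcolon N K) -> M_le (M_act d (mtop M)) K ->
  L_le (L_mul c d) (lsqrt (mcolon N (mtop M))).
Proof.
  intros Hcm Hc Hd hn Hcn HdK.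
  apply L_sup_ub. split; [now apply Hcm |].
  exists n. split; [exact hn |]. apply le_mcolon.
  rewrite lpow_mul, M_act_mul.
  apply M_le_trans with (M_act (lpow c n) K).
  { apply act_mono_r. apply M_le_trans with (M_act d (mtop M)); [| exact HdK].
    exact (lpow_act_top_le d hn). }
  apply M_le_trans with (M_act (mcolon N K) K).
  - now apply act_mono_l.
  - apply mcolon_act_le.
Qed.

End ModuleFacts.
Arguments compact_product_in_radical {L M N K c d n} _ _ _ _ _ _.

Theorem theorem3p29 (L : MultLattice) (M : LModule L)
  (HL : L_standard L) (HPG : PG_lattice L)
  (Hfaith : M_faithful M) (Hmult : M_multiplication M) (HPGM : PG_module M)
  (Hcomp : M_compact (mtop M)) :
  forall N : M, M_proper N ->
  forall K : M, M_proper K -> ~ M_le K N ->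
    M_le (M_act (lsqrt (mcolon N K)) K) (delta1 N).
Proof.
  intros N _ K _ _.
  destruct HL as [Hdec [_ Hcm]].
  set (k := mcolon K (mtop M)).
  assert (HK : K = M_act k (mtop M)) by now apply multiplication_colon_eq.
  (* sqrt(N : K) K is the join of the c K with c compact and c^n <= (N : K) *)
  apply act_sup_le. intros c [Hc [n [hn Hcn]]].
  (* c K = c k I_M is the join of the (c d) I_M with d compact, d <= k *)
  rewrite HK, (Hdec k), <- M_act_mul, L_mul_sup.
  apply act_mono_l, L_sup_least. intros y [d [[Hd Hdk] ->]].
  apply (compact_product_in_radical Hcm Hc Hd hn Hcn).
  rewrite HK. now apply act_mono_l.
Qed.
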